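(* Let $q$ be a prime power and let $N, T, n$ be positive integers. Let $\boldsymbol{\mathcal{X}} \subseteq (\mathbb{F}_q^{N\times T})^n$ be an $n$-shot matrix code, and let $\rho,\tau$ be nonnegative integers. If $d_{\mathrm{S}}(\langle \boldsymbol{\mathcal{X}}\rangle) > 2(2\tau+\rho)$, then $\boldsymbol{\mathcal{X}}$ is $(\rho,\tau)$-correcting.
   Context: An $n$-shot matrix code is a non-empty subset $\boldsymbol{\mathcal{X}}\subseteq(\mathbb{F}_q^{N\times T})^n$. The channel is used $n$ times: on input $(\mathbf{X}_0,\ldots,\mathbf{X}_{n-1})\in\boldsymbol{\mathcal{X}}$ the output is $(\mathbf{Y}_0,\ldots,\mathbf{Y}_{n-1})$ with $\mathbf{Y}_j=\mathbf{A}_j\mathbf{X}_j+\mathbf{Z}_j$, where $\mathbf{A}_j\in\mathbb{F}_q^{N\times N}$ and $\mathbf{Z}_j\in\mathbb{F}_q^{N\times T}$ are arbitrary subject to $\sum_{j=0}^{n-1}(N-\operatorname{rank}\mathbf{A}_j)\le\rho$ and $\sum_{j=0}^{n-1}\operatorname{rank}\mathbf{Z}_j\le\tau$. The code is called $(\rho,\tau)$-correcting if the transmitted codeword $(\mathbf{X}_0,\ldots,\mathbf{X}_{n-1})$ can be unambiguously determined from $(\mathbf{Y}_0,\ldots,\mathbf{Y}_{n-1})$ for all such choices of $(\mathbf{A}_j)$ and $(\mathbf{Z}_j)$, i.e., no two distinct codewords can produce the same output. For a matrix $\mathbf{X}$, $\langle\mathbf{X}\rangle$ denotes the row space of $\mathbf{X}$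 (a subspace of $\mathbb{F}_q^T$). For subspaces $U,V$, the subspace distance is $d_{\mathrm{S}}(U,V)=\dim(U+V)-\dim(U\cap V)$; for $n$-tuples of subspaces $\boldsymbol{U}=(U_0,\dots,U_{n-1})$, $\boldsymbol{V}=(V_0,\dots,V_{n-1})$ the extended subspace distance is $d_{\mathrm{S}}(\boldsymbol{U},\boldsymbol{V})=\sum_{j=0}^{n-1}d_{\mathrm{S}}(U_j,V_j)$. For a codeword $\boldsymbol{X}=(\mathbf{X}_0,\dots,\mathbf{X}_{n-1})$, $\langle\boldsymbol{X}\rangle=(\langle\mathbf{X}_0\rangle,\dots,\langle\mathbf{X}_{n-1}\rangle)$, and $\langle\boldsymbol{\mathcal{X}}\rangle$ is the multiset/collection $\{\langle\boldsymbol{X}\rangle:\boldsymbol{X}\in\boldsymbol{\mathcal{X}}\}$; $d_{\mathrm{S}}(\langle\boldsymbol{\mathcal{X}}\rangle)$ is the minimum of $d_{\mathrm{S}}(\langle\boldsymbol{X}\rangle,\langle\boldsymbol{X}'\rangle)$ over distinct codewords $\boldsymbol{X}\neq\boldsymbol{X}'$ in $\boldsymbol{\mathcal{X}}$. *)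

From HB Require Import structures.
From mathcomp Require Import all_boot all_order all_algebra.
Set Implicit Arguments. Unset Strict Implicit. Unset Printing Implicit Defensive.
Import GRing.Theory.
Local Open Scope ring_scope.

Definition codeword (F : finFieldType) (N T n : nat) :=
  {ffun 'I_n -> 'M[F]_(N, T)}.

Definition dS_mx (F : fieldType) (N T : nat) (A B : 'M[F]_(N, T)) : nat :=
  (\rank (A + B)%MS - \rank (A :&: B)%MS)%N.

Definition dS_cw (F : finFieldType) (N T n : nat) (X Y : codeword F N T n) : nat :=
  (\sum_(j < n) dS_mx (X j) (Y j))%N.

Definition min_dS_gt (F : finFieldType) (N T n : nat)
    (C : {set codeword F N T n}) (d : nat) : Prop :=
  forall X Y, X \in C -> Y \in C -> X != Y -> (d < dS_cw X Y)%N.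

Definition admissible (F : finFieldType) (N T n rho tau : nat)
    (A : 'I_n -> 'M[F]_N) (Z : 'I_n -> 'M[F]_(N, T)) : Prop :=
  (\sum_(j < n) (N - \rank (A j)) <= rho)%N /\
  (\sum_(j < n) \rank (Z j) <= tau)%N.

Definition channel_out (F : finFieldType) (N T n : nat)
    (A : 'I_n -> 'M[F]_N) (Z : 'I_n -> 'M[F]_(N, T)) (X : codeword F N T n)
  : 'I_n -> 'M[F]_(N, T) :=
  fun j => A j *m X j + Z j.

Definition correcting (F : finFieldType) (N T n : nat)
    (C : {set codeword F N T n}) (rho tau : nat) : Prop :=
  forall X X', X \in C -> X' \in C -> X != X' ->
  forall (A A' : 'I_n -> 'M[F]_N) (Z Z' : 'I_n -> 'M[F]_(N, T)),
    admissible rho tau A Z -> admissible rho tau A' Z' ->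
    ~ (forall j, channel_out A Z X j = channel_out A' Z' X' j).

From HB Require Import structures.
From mathcomp Require Import all_boot all_order all_algebra.
From mathcomp Require Import zify.
Set Implicit Arguments. Unset Strict Implicit. Unset Printing Implicit Defensive.
Import GRing.Theory.
Local Open Scope ring_scope.

(* If two codewords X, X' give the same output A X + Z = A' X' + Z', then
   <A' X'> lies in <X'> and in <X> + <Z - Z'>, so <X'> gains at most
   (N - rank A') + rank (Z - Z') dimensions over <X> in <X> + <X'>;
   symmetrically for <X>.  Since d_S(<X>,<X'>) is the sum of these two gains,
   each shot contributes at most 2 (rank Z_j + rank Z'_j) + (N - rank A_j)
   + (N - rank A'_j), which sums to at most 2 (2 tau + rho). *)

Lemma dS_mxE (F : fieldType) (N T : nat) (X X' : 'M[F]_(N, T)) :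
  dS_mx X X' =
    (\rank (X + X')%MS - \rank X + (\rank (X + X')%MS - \rank X'))%N.
Proof.
have := mxrank_sum_cap X X'.
have := mxrankS (addsmxSl X X'); have := mxrankS (addsmxSr X X').
rewrite /dS_mx; lia.
Qed.

Lemma mxrank_adds_sub_common (F : fieldType) (N T : nat) (U V Q D : 'M[F]_(N, T)) :
  (Q <= V)%MS -> (Q <= U + D)%MS ->
  (\rank (U + V)%MS + \rank Q <= \rank U + \rank V + \rank D)%N.
Proof.
move=> sQV sQUD.
have UV_UQV : (\rank (U + V)%MS <= \rank (U + Q + V)%MS)%N.
  by apply/mxrankS/addsmxS => //; apply: addsmxSl.
have Q_cap : (\rank Q <= \rank ((U + Q) :&: V)%MS)%N.
  by apply: mxrankS; rewrite sub_capmx sQV addsmxSr.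
have UQ_UD : (\rank (U + Q)%MS <= \rank (U + D)%MS)%N.
  by apply: mxrankS; rewrite addsmx_sub addsmxSl.
have := mxrank_sum_cap (U + Q)%MS V; have := mxrank_adds_leqif U D.
case=> UD _; lia.
Qed.

Lemma mxrank_adds_channel (F : fieldType) (N T : nat) (A A' : 'M[F]_N)
    (X X' Z Z' : 'M[F]_(N, T)) :
  A *m X + Z = A' *m X' + Z' ->
  (\rank (X + X')%MS <= \rank X + (N - \rank A') + \rank (Z - Z')%R)%N.
Proof.
move=> E.
have sAX' : (A' *m X' <= X + (Z - Z'))%MS.
  by rewrite -[A' *m X'](addrK Z') -E -addrA addmx_sub_adds ?submxMl.
have := mxrank_adds_sub_common (submxMl A' X') sAX'.
have := mxrank_mul_min A' X'; have := rank_leq_row A'; lia.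
Qed.

Lemma dS_mx_channel (F : fieldType) (N T : nat) (A A' : 'M[F]_N)
    (X X' Z Z' : 'M[F]_(N, T)) :
  A *m X + Z = A' *m X' + Z' ->
  (dS_mx X X' <= 2 * (\rank Z + \rank Z') + (N - \rank A + (N - \rank A')))%N.
Proof.
move=> E.
have rankZZ' : \rank (Z' - Z)%R = \rank (Z - Z')%R.
  by rewrite -mxrank_opp opprB.
have rankZ : (\rank (Z - Z')%R <= \rank Z + \rank Z')%N.
  by rewrite -(mxrank_opp Z'); apply: mxrank_add.
have := mxrank_adds_channel E; have := mxrank_adds_channel (esym E).
rewrite addsmxC rankZZ' dS_mxE; lia.
Qed.

Local Close Scope ring_scope.

Lemma dS_cw_channel (F : finFieldType) (N T n rho tau : nat)
    (A A' : 'I_n -> 'M[F]_N) (Z Z' : 'I_n -> 'M[F]_(N, T))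
    (X X' : codeword F N T n) :
  admissible rho tau A Z -> admissible rho tau A' Z' ->
  (forall j, channel_out A Z X j = channel_out A' Z' X' j) ->
  dS_cw X X' <= 2 * (2 * tau + rho).
Proof.
move=> [hA hZ] [hA' hZ'] same_out.
have sum_bound : dS_cw X X' <= \sum_(j < n) (2 * (\rank (Z j) + \rank (Z' j))
    + (N - \rank (A j) + (N - \rank (A' j)))).
  by apply: leq_sum => j _; apply/dS_mx_channel/same_out.
apply: leq_trans sum_bound _.
rewrite big_split /= -big_distrr /= !big_split /=.
apply: leq_trans (leq_add (leq_mul (leqnn 2) (leq_add hZ hZ')) (leq_add hA hA')) _.
lia.
Qed.

Theorem mainTheorem1 (F : finFieldType) (N T n : nat)
    (C : {set codeword F N T n}) (rho tau : nat) :
  (0 < N)%N -> (0 < T)%N -> (0 < n)%N -> C != set0 ->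
  min_dS_gt C (2 * (2 * tau + rho)) ->
  correcting C rho tau.
Proof.
move=> _ _ _ _ hmin X X' XC X'C neqXX' A A' Z Z' adm adm' same_out.
by have := hmin X X' XC X'C neqXX'; rewrite ltnNge (dS_cw_channel adm adm' same_out).
Qed.
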